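(* Let $F$ be a discrete time regulatory network on $[0,1]^d$ satisfying coordinatewise injectivity whose interaction matrix $K$ is non-degenerated, and let $(V,\mathcal A)$ be its underlying network. If $\{i,j\}\subset V$ is a 2-loop in $(V,\mathcal A)$ whose isolated end is $j$, then $i$ drives $j$.
   Context: $V=\{1,\dots,d\}$; $K\in[0,1]^{d\times d}$ with $\sum_iK_{i,j}=1$ for each $j$; $s\in\{-1,0,1\}^{d\times d}$, $T\in[0,1]^{d\times d}$ with $s_{i,j}=0$ iff $K_{i,j}=0$ and $T_{i,j}=0$ iff $K_{i,j}=0$; $a\in[0,1]$; $H(x)=0$ for $x\le0$, $1$ otherwise; $F(x)_j=ax_j+(1-a)\sum_iK_{i,j}H(s_{i,j}(x_i-T_{i,j}))$. Underlying network: $\mathcal A=\{(i,j):K_{i,j}>0\}$. Coordinatewise injectivity: for each $j$, with $\mathcal F_j=\{x\mapsto ax+(1-a)\sum_i\epsilon_iK_{i,j}:\epsilon\in\{0,1\}^d\}$, distinct $f,f'\in\mathcal F_j$ have $f([0,1])\cap f'([0,1])=\emptyset$. $K$ is non-degenerated if for each $j$ the map $\epsilon\mapsto\sum_i\epsilon_iK_{i,j}$, defined on $\{\epsilon\in\{0,1\}^d:\epsilon_i=0$ whenever $K_{i,j}=0\}$, is injective. A 2-loop with isolated end $j$ is a pair $\{i,j\}$ such that $(i,j)\in\mathcal A$ and $i$ is the only tail of an arrow with head $j$, and $(j,i)\in\mathcal A$ and $i$ is the only head of an arrow with tail $j$. Base partition: $\mathcal P_k$ is the set of nonempty level sets of $u\mapsto(H(s_{k,l}(u-T_{k,l})))_{l=1}^d$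 on $[0,1]$, $\mathcal P=\{\prod_kI_k:I_k\in\mathcal P_k\}$; $\mathcal P^1=\mathcal P$, $\mathcal P^{t+1}=\{F^{-1}(\mathbf I)\cap\mathbf J\ne\emptyset:\mathbf I\in\mathcal P^t,\mathbf J\in\mathcal P\}$; $\mathcal Q^t=\{F^{t-1}(\mathbf I):\mathbf I\in\mathcal P^t\}$, $\mathcal Q_k^t=\{\Pi_k\mathbf J:\mathbf J\in\mathcal Q^t\}$ ($\Pi_k$ the $k$-th coordinate projection). For $J\in\mathcal Q_i^t$ let $C_j(J)=\{\Pi_j\mathbf J:\mathbf J\in\mathcal Q^t,\ \Pi_i\mathbf J=J\}$. Vertex $i$ drives vertex $j$ if there is $m_{i,j}\in\mathbb N$ with $\#C_j(J)\le m_{i,j}$ for all $J\in\bigcup_{t\ge1}\mathcal Q_i^t$. *)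

From HB Require Import structures.
From mathcomp Require Import all_boot all_order all_algebra.
From mathcomp Require Import classical_sets reals.
Set Implicit Arguments. Unset Strict Implicit. Unset Printing Implicit Defensive.
Import Order.TTheory GRing.Theory Num.Theory.
Local Open Scope ring_scope.
Local Open Scope classical_set_scope.

Section RegNet.
Variables (R : realType) (d : nat).

Definition Heav (x : R) : R := if x <= 0 then 0 else 1.

Definition unitI : set R := [set u | 0 <= u <= 1].

Definition regF (K s T : 'I_d -> 'I_d -> R) (a : R) (x : 'I_d -> R) : 'I_d -> R :=
  fun j => a * x j + (1 - a) * \sum_(i < d) K i j * Heav (s i j * (x i - T i j)).

Definition regnet_params (K s T : 'I_d -> 'I_d -> R) (a : R) : Prop :=
  (forall i j, 0 <= K i j <= 1) /\
  (forall j, \sum_(i < d) K i j = 1) /\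
  (forall i j, s i j = -1 \/ s i j = 0 \/ s i j = 1) /\
  (forall i j, s i j = 0 <-> K i j = 0) /\
  (forall i j, 0 <= T i j <= 1) /\
  (forall i j, T i j = 0 <-> K i j = 0) /\
  0 <= a <= 1.

Definition arrow (K : 'I_d -> 'I_d -> R) (i j : 'I_d) : Prop := 0 < K i j.

Definition fmap (K : 'I_d -> 'I_d -> R) (a : R) (j : 'I_d) (eps : 'I_d -> bool)
  (x : R) : R := a * x + (1 - a) * \sum_(i < d) (eps i)%:R * K i j.

Definition coord_injective (K : 'I_d -> 'I_d -> R) (a : R) : Prop :=
  forall (j : 'I_d) (eps eps' : 'I_d -> bool),
    fmap K a j eps <> fmap K a j eps' ->
    forall x y, unitI x -> unitI y -> fmap K a j eps x <> fmap K a j eps' y.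

Definition non_degenerated (K : 'I_d -> 'I_d -> R) : Prop :=
  forall (j : 'I_d) (eps eps' : 'I_d -> bool),
    (forall i, K i j = 0 -> eps i = false) ->
    (forall i, K i j = 0 -> eps' i = false) ->
    \sum_(i < d) (eps i)%:R * K i j = \sum_(i < d) (eps' i)%:R * K i j ->
    eps = eps'.

Definition two_loop_isolated_end (K : 'I_d -> 'I_d -> R) (i j : 'I_d) : Prop :=
  [/\ arrow K i j, (forall k, arrow K k j -> k = i),
      arrow K j i & (forall k, arrow K j k -> k = i)].

Definition Pk (s T : 'I_d -> 'I_d -> R) (k : 'I_d) : set (set R) :=
  [set I | exists2 u0, unitI u0 &
     I = [set u | unitI u /\
           (fun l => Heav (s k l * (u - T k l))) =
           (fun l => Heav (s k l * (u0 - T k l)))]].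

Definition Pbase (s T : 'I_d -> 'I_d -> R) : set (set ('I_d -> R)) :=
  [set B | exists2 I : 'I_d -> set R, (forall k, Pk s T k (I k)) &
     B = [set x | forall k, I k (x k)]].

(* Pt n = P^(n+1) *)
Fixpoint Pt (K s T : 'I_d -> 'I_d -> R) (a : R) (n : nat) : set (set ('I_d -> R)) :=
  match n with
  | 0 => Pbase s T
  | n'.+1 => [set B | exists I J, [/\ Pt K s T a n' I, Pbase s T J,
               B = (regF K s T a @^-1` I) `&` J & B !=set0]]
  end.

(* Qt n = Q^(n+1) = { F^n (I) : I in P^(n+1) } *)
Definition Qt (K s T : 'I_d -> 'I_d -> R) (a : R) (n : nat) : set (set ('I_d -> R)) :=
  [set B | exists2 I, Pt K s T a n I & B = iter n (regF K s T a) @` I].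

Definition proj (k : 'I_d) (B : set ('I_d -> R)) : set R := [set x k | x in B].

(* Q_k^(n+1) *)
Definition Qtk (K s T : 'I_d -> 'I_d -> R) (a : R) (n : nat) (k : 'I_d) : set (set R) :=
  [set proj k B | B in Qt K s T a n].

Definition Cset (K s T : 'I_d -> 'I_d -> R) (a : R) (n : nat) (i j : 'I_d)
  (J : set R) : set (set R) :=
  [set proj j B | B in [set B | Qt K s T a n B /\ proj i B = J]].

(* #C <= m, expressed as: C is covered by the range of a map from 'I_m *)
Definition card_le {X : Type} (C : set X) (m : nat) : Prop :=
  exists f : 'I_m -> X, C `<=` range f.

Definition drives (K s T : 'I_d -> 'I_d -> R) (a : R) (i j : 'I_d) : Prop :=
  exists m : nat, forall (n : nat) (J : set R),
    Qtk K s T a n i J -> card_le (Cset K s T a n i j J) m.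

End RegNet.

From mathcomp Require Import all_boot all_order all_algebra.
From mathcomp Require Import boolp classical_sets reals.
From mathcomp Require Import lra.
Set Implicit Arguments. Unset Strict Implicit. Unset Printing Implicit Defensive.
Import Order.TTheory GRing.Theory Num.Theory.
Local Open Scope ring_scope.
Local Open Scope classical_set_scope.

(* An element of P^(n+1) is a cell: the points of the cube whose switches
   H(s_kl (F^t(x)_k - T_kl)) agree with those of a given point for all t <= n.
   When 0 < a < 1, coordinate injectivity and non-degeneracy let F(x)_i recover
   x_i together with every switch entering i; iterating, F^n(x)_i determines
   the i-trajectory up to time n and the switches of the arrow j -> i before
   time n.  Since j hears only from i and speaks only to i, the j-coordinate of
   a point of one cell can be transplanted onto a point of another cell with
   the same i-trajectory and the same last switch j -> i without disturbing
   any other switch.  Hence, above a given i-projection, the j-projection of an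
   image cell is determined by the side of T_ji on which it lies at time n, and
   there are at most two of them.  For a = 1 the map is the identity, and for
   a = 0 the j-projection of an image cell is a single point, 0 or 1. *)

Lemma card_le2_classifier (X : Type) (C : set (set X)) (g : set X -> bool) :
  (forall A A', C A -> C A' -> g A = g A' -> A = A') -> card_le C 2.
Proof.
move=> g_inj.
have /choice[h hP] : forall b : bool, exists A : set X,
    (exists2 A', C A' & g A' = b) -> C A /\ g A = b.
  move=> b; have [[A' CA' gA']|nA] := pselect (exists2 A', C A' & g A' = b).
    by exists A' => _.
  by exists set0 => /nA.
exists (fun k : 'I_2 => h (k == ord_max)) => A CA.
exists (if g A then ord_max else ord0) => //.
have -> : ((if g A then ord_max else ord0) == ord_max :> 'I_2) = g A.
  by case: (g A).
have [Ch gh] := hP (g A) (ex_intro2 _ _ A CA erefl).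
exact: g_inj.
Qed.

Lemma drives_self (R : realType) (d : nat) (K s T : 'I_d -> 'I_d -> R) (a : R)
    (i : 'I_d) : drives K s T a i i.
Proof.
by exists 1%N => n J _; exists (fun=> J) => _ [B [_ <-] <-]; exists ord0.
Qed.

Section Heaviside.
Variable R : realType.

Lemma Heav01 (v : R) : Heav v = 0 \/ Heav v = 1.
Proof. by rewrite /Heav; case: ifP; auto. Qed.

Lemma Heav0 : Heav (0 : R) = 0.
Proof. by rewrite /Heav lexx. Qed.

Lemma Heav_nat (v : R) : Heav v = (Heav v != 0)%:R.
Proof. by case: (Heav01 v) => ->; rewrite ?eqxx ?oner_eq0. Qed.

Lemma Heav_eq (u v : R) : (Heav u != 0) = (Heav v != 0) -> Heav u = Heav v.
Proof. by move=> uv; rewrite Heav_nat uv -Heav_nat. Qed.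

End Heaviside.

Section RegulatoryNetwork.
Variables (R : realType) (d : nat) (K s T : 'I_d -> 'I_d -> R) (a : R).
Hypothesis params : regnet_params K s T a.
Local Notation F := (regF K s T a).

Lemma K_ge0 k l : 0 <= K k l.
Proof. by case: params => /(_ k l)/andP[? _]. Qed.

Lemma s_eq0_of_K k l : K k l = 0 -> s k l = 0.
Proof. by case: params => _ [_ [_ [/(_ k l)[_]]]]. Qed.

Lemma K_eq0_of_not_arrow k l : ~ arrow K k l -> K k l = 0.
Proof.
move=> /negP; rewrite -leNgt => K_le0.
by apply/eqP; rewrite eq_le K_le0 K_ge0.
Qed.

Definition in_cube (x : 'I_d -> R) := forall k, unitI (x k).

Lemma regF_in_cube x : in_cube x -> in_cube (F x).
Proof.
move=> x_cube l; case: params => _ [K_sum [_ [_ [_ [_ /andP[a_ge0 a_le1]]]]]].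
rewrite /regF; set S := \sum_(k < d) _.
have /andP[S_ge0 S_le1] : 0 <= S <= 1.
  rewrite -(K_sum l); apply/andP; split.
    by apply: sumr_ge0 => k _; case: (Heav01 (s k l * (x k - T k l))) => ->;
      rewrite ?mulr0 ?mulr1 ?K_ge0.
  by apply: ler_sum => k _; case: (Heav01 (s k l * (x k - T k l))) => ->;
    rewrite ?mulr0 ?mulr1 ?K_ge0.
have /andP[x_ge0 x_le1] := x_cube l.
by apply/andP; split; nra.
Qed.

Lemma iter_regF_in_cube n x : in_cube x -> in_cube (iter n F x).
Proof. by move=> x_cube; elim: n => //= n; apply: regF_in_cube. Qed.

Definition switch t x k l := Heav (s k l * (iter t F x k - T k l)).

Definition cell n x0 : set ('I_d -> R) :=
  [set x | in_cube x /\
     forall t, (t <= n)%N -> forall k l, switch t x k l = switch t x0 k l].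

Lemma cell_eq n x0 x : cell n x0 x -> cell n x0 = cell n x.
Proof.
case=> _ x_sw; apply/seteqP; split=> y [y_cube y_sw]; split=> // t tn k l.
  by rewrite y_sw ?x_sw.
by rewrite y_sw ?x_sw.
Qed.

Lemma Pbase_cell B : Pbase s T B -> exists2 x, in_cube x & B = cell 0 x.
Proof.
case=> I I_Pk ->.
have /choice[x x_P] : forall k, exists u0, unitI u0 /\ I k =
    [set u | unitI u /\ (fun l => Heav (s k l * (u - T k l))) =
                        (fun l => Heav (s k l * (u0 - T k l)))].
  by move=> k; case: (I_Pk k) => u0; exists u0.
exists x => [k|]; first by case: (x_P k).
apply/seteqP; split=> y /=.
  move=> y_I; split=> [k|t]; first by have := y_I k; rewrite (x_P k).2 => -[].
  rewrite leqn0 => /eqP -> k l; have := y_I k; rewrite (x_P k).2.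
  by case=> _ /(congr1 (fun f => f l)).
case=> y_cube y_sw k; rewrite (x_P k).2; split; first exact: y_cube.
by apply: funext => l; exact: (y_sw 0%N (leqnn 0)).
Qed.

Lemma regF_preimage_cell n x : in_cube x ->
  F @^-1` cell n (F x) `&` cell 0 x = cell n.+1 x.
Proof.
move=> x_cube; apply/seteqP; split=> y /=.
  case=> -[_ Fy_sw] [y_cube y_sw0]; split=> // -[|t] tn k l; first exact: y_sw0.
  by have := Fy_sw t tn k l; rewrite /switch !iterSr.
case=> y_cube y_sw; split; split; first exact: regF_in_cube.
- by move=> t tn k l; have := y_sw t.+1 tn k l; rewrite /switch !iterSr.
- exact: y_cube.
- by move=> t; rewrite leqn0 => /eqP -> k l; apply: y_sw.
Qed.

Lemma Pt_cell n B : Pt K s T a n B -> exists2 x, in_cube x & B = cell n x.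
Proof.
elim: n B => [|n IH] B; first exact: Pbase_cell.
case=> I [J [/IH[x0 _ ->] /Pbase_cell[x1 _ ->] -> [x [Fx_in x_in]]]].
have x_cube : in_cube x by case: x_in.
exists x => //; rewrite (cell_eq Fx_in) (cell_eq x_in).
exact: regF_preimage_cell.
Qed.

Lemma Qt_cell n B : Qt K s T a n B ->
  exists2 x, in_cube x & B = iter n F @` cell n x.
Proof. by case=> I /Pt_cell[x x_cube ->] ->; exists x. Qed.

Lemma iter_regF_id n x : a = 1 -> iter n F x = x.
Proof.
move=> a1; elim: n => //= n ->; apply: funext => k.
by rewrite /regF a1 subrr mul0r addr0 mul1r.
Qed.

Lemma regF_fmap x k :
  F x k = fmap K a k (fun l => Heav (s l k * (x l - T l k)) != 0) (x k).
Proof.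
rewrite /regF /fmap; congr (_ + _ * _); apply: eq_bigr => l _.
by rewrite mulrC -Heav_nat.
Qed.

Section CoordinateInjectivity.
Hypotheses (inj : coord_injective K a) (nondeg : non_degenerated K).
Hypotheses (a_neq0 : a != 0) (a_neq1 : a != 1).

Lemma regF_coord_inj x x' k : in_cube x -> in_cube x' -> F x k = F x' k ->
  x k = x' k /\
  forall l, Heav (s l k * (x l - T l k)) = Heav (s l k * (x' l - T l k)).
Proof.
move=> x_cube x'_cube; rewrite !regF_fmap.
set eps := fun l => _; set eps' := fun l => _ => Fxx'.
have f_eq : fmap K a k eps = fmap K a k eps'.
  by apply: contrapT => f_neq; exact: inj f_neq _ _ (x_cube k) (x'_cube k) Fxx'.
have sum_eq : \sum_l (eps l)%:R * K l k = \sum_l (eps' l)%:R * K l k.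
  have := congr1 (fun f => f 0) f_eq; rewrite /fmap !mulr0 !add0r.
  by apply: mulfI; rewrite subr_eq0 eq_sym.
have eps_eq : eps = eps'.
  apply: (nondeg (j := k)) => // l /s_eq0_of_K s0;
    by rewrite /eps /eps' s0 mul0r Heav0 eqxx.
split; first by move: Fxx'; rewrite /fmap sum_eq => /addIr /(mulfI a_neq0).
by move=> l; apply: Heav_eq; exact: (congr1 (fun e => e l) eps_eq).
Qed.

Lemma iter_regF_coord_inj n x x' k : in_cube x -> in_cube x' ->
  iter n F x k = iter n F x' k ->
  forall t, (t <= n)%N -> iter t F x k = iter t F x' k.
Proof.
move=> x_cube x'_cube; elim: n => [|n IH] xx' t.
  by rewrite leqn0 => /eqP ->.
rewrite leq_eqVlt => /orP[/eqP -> //|]; rewrite ltnS; apply: IH.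
have xn_cube := iter_regF_in_cube n x_cube.
have x'n_cube := iter_regF_in_cube n x'_cube.
exact: (regF_coord_inj xn_cube x'n_cube xx').1.
Qed.

Lemma switch_into_eq n x x' k : in_cube x -> in_cube x' ->
  iter n F x k = iter n F x' k ->
  forall t l, (t < n)%N -> switch t x l k = switch t x' l k.
Proof.
move=> x_cube x'_cube xx' t l tn.
have xt_cube := iter_regF_in_cube t x_cube.
have x't_cube := iter_regF_in_cube t x'_cube.
have := iter_regF_coord_inj x_cube x'_cube xx' tn; rewrite !iterS.
by case/(regF_coord_inj xt_cube x't_cube) => _ /(_ l).
Qed.

End CoordinateInjectivity.

Section TwoLoop.
Variables i j : 'I_d.
Hypotheses (loop : two_loop_isolated_end K i j) (i_neq_j : i != j).

Lemma K_into_j k : k != i -> K k j = 0.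
Proof.
case: loop => _ into_j _ _ k_neq_i.
apply: K_eq0_of_not_arrow => /into_j k_i.
by rewrite k_i eqxx in k_neq_i.
Qed.

Lemma K_out_of_j l : l != i -> K j l = 0.
Proof.
case: loop => _ _ _ out_of_j l_neq_i.
apply: K_eq0_of_not_arrow => /out_of_j l_i.
by rewrite l_i eqxx in l_neq_i.
Qed.

Lemma regF_j x : F x j = a * x j + (1 - a) * Heav (s i j * (x i - T i j)).
Proof.
have [_ [K_sum _]] := params.
have K_ij : K i j = 1.
  by rewrite -(K_sum j) (bigD1 i) //= big1 ?addr0 // => k /K_into_j.
rewrite /regF (bigD1 i) //= big1 ?addr0 ?K_ij ?mul1r // => k /K_into_j ->.
exact: mul0r.
Qed.

Definition splice (u u' : 'I_d -> R) k := if k == j then u j else u' k.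

Lemma splice_in_cube u u' : in_cube u -> in_cube u' -> in_cube (splice u u').
Proof. by move=> u_cube u'_cube k; rewrite /splice; case: ifP. Qed.

Lemma regF_splice u u' :
  Heav (s i j * (u i - T i j)) = Heav (s i j * (u' i - T i j)) ->
  Heav (s j i * (u j - T j i)) = Heav (s j i * (u' j - T j i)) ->
  F (splice u u') = splice (F u) (F u').
Proof.
move=> sw_ij sw_ji; apply: funext => k; rewrite /splice.
have [->|k_neq_j] := eqVneq k j.
  by rewrite !regF_j /splice eqxx (negbTE i_neq_j) sw_ij.
rewrite /regF /splice (negbTE k_neq_j); congr (_ + _ * _).
apply: eq_bigr => l _.
have [->|//] := eqVneq l j.
have [->|k_neq_i] := eqVneq k i; first by rewrite sw_ji.
by rewrite K_out_of_j // !mul0r.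
Qed.

Lemma iter_splice n u u' :
  (forall t, (t < n)%N ->
     switch t u i j = switch t u' i j /\ switch t u j i = switch t u' j i) ->
  iter n F (splice u u') = splice (iter n F u) (iter n F u').
Proof.
elim: n => // n IH sw; rewrite !iterS IH => [|t tn]; last exact/sw/ltnW.
by have [] := sw n (ltnSn n); apply: regF_splice.
Qed.

Lemma proj_cell_sub n x x' : in_cube x' ->
  (forall t, (t < n)%N -> switch t x i j = switch t x' i j) ->
  (forall t, (t <= n)%N -> switch t x j i = switch t x' j i) ->
  proj j (iter n F @` cell n x) `<=` proj j (iter n F @` cell n x').
Proof.
move=> x'_cube sw_ij sw_ji _ [_ [z [z_cube z_sw] <-] <-].
have iter_w t : (t <= n)%N ->
    iter t F (splice z x') = splice (iter t F z) (iter t F x').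
  move=> tn; apply: iter_splice => t' t't; have t'n := leq_trans t't tn.
  by rewrite !z_sw ?sw_ij ?sw_ji ?(ltnW t'n).
exists (iter n F (splice z x')); last by rewrite iter_w // /splice eqxx.
exists (splice z x') => //; split; first exact: splice_in_cube.
move=> t tn k l; rewrite /switch iter_w // /splice.
have [->|//] := eqVneq k j.
have [->|l_neq_i] := eqVneq l i.
  exact: etrans (z_sw t tn j i) (sw_ji t tn).
by rewrite s_eq0_of_K ?K_out_of_j // !mul0r.
Qed.

Lemma switch_on_proj n x y : proj j (iter n F @` cell n x) y ->
  Heav (s j i * (y - T j i)) = switch n x j i.
Proof. by case=> _ [z [_ z_sw] <-] <-; exact: z_sw. Qed.

Lemma proj_cell_a0 n x : a = 0 -> in_cube x ->
  proj j (iter n.+1 F @` cell n.+1 x) = [set switch n x i j].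
Proof.
move=> a0 x_cube.
have Fj y : F y j = Heav (s i j * (y i - T i j)).
  by rewrite regF_j a0 mul0r add0r subr0 mul1r.
apply/seteqP; split=> [_ [_ [z [_ z_sw] <-] <-]|_ ->] /=.
  by rewrite Fj; exact: (z_sw n (leqnSn n)).
by exists (iter n.+1 F x); [exists x | rewrite iterS Fj].
Qed.

Hypotheses (inj : coord_injective K a) (nondeg : non_degenerated K).

Lemma loop_switches_eq n x x' :
  in_cube x -> in_cube x' -> (a != 0 \/ n = 0%N) ->
  iter n F x i = iter n F x' i -> switch n x j i = switch n x' j i ->
  (forall t, (t < n)%N -> switch t x i j = switch t x' i j) /\
  (forall t, (t <= n)%N -> switch t x j i = switch t x' j i).
Proof.
move=> x_cube x'_cube a_n xx' sw_n.
have [a1|a_neq1] := eqVneq a 1.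
  move: xx' sw_n; rewrite /switch !iter_regF_id // => xx' sw_n.
  by split=> t _; rewrite !iter_regF_id // xx'.
case: a_n => [a_neq0|n0]; last first.
  by subst n; split=> // t; rewrite leqn0 => /eqP ->.
have trajectory_i :=
  iter_regF_coord_inj inj nondeg a_neq0 a_neq1 x_cube x'_cube xx'.
split=> [t tn|t]; first by rewrite /switch trajectory_i // ltnW.
rewrite leq_eqVlt => /orP[/eqP -> //|].
exact: switch_into_eq.
Qed.

Lemma proj_cell_eq n x w : in_cube x -> (a != 0 \/ n = 0%N) ->
  proj i (iter n F @` cell n x) = proj i (iter n F @` cell n w) ->
  switch n x j i = switch n w j i ->
  proj j (iter n F @` cell n x) = proj j (iter n F @` cell n w).
Proof.
move=> x_cube a_n proj_i_eq sw_n.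
have : proj i (iter n F @` cell n w) (iter n F x i).
  by rewrite -proj_i_eq; exists (iter n F x) => //; exists x.
case=> _ [x' x'_in <-] x'x; rewrite (cell_eq x'_in).
have [x'_cube x'_sw] := x'_in.
rewrite -(x'_sw n (leqnn n)) in sw_n.
have [sw_ij sw_ji] := loop_switches_eq x_cube x'_cube a_n (esym x'x) sw_n.
have [sw_ij' sw_ji'] := loop_switches_eq x'_cube x_cube a_n x'x (esym sw_n).
by apply/seteqP; split; apply: proj_cell_sub.
Qed.

Lemma two_loop_drives : drives K s T a i j.
Proof.
exists 2%N => n J _.
have [[[n' ->] a0]|a_n] :
    (exists n', n = n'.+1) /\ a = 0 \/ (a != 0 \/ n = 0%N).
  case: n => [|n']; first by right; right.
  by have [a0|] := eqVneq a 0; [left; split; first exists n' | right; left].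
  exists (fun b : 'I_2 => [set (b : nat)%:R]).
  move=> _ [_ [/Qt_cell[x x_cube ->] _] <-]; rewrite proj_cell_a0 //.
  case: (Heav01 (s i j * (iter n' F x i - T i j))) => sw.
    by exists ord0 => //; rewrite /switch sw.
  by exists ord_max => //; rewrite /switch sw.
pose on_side A := `[< exists2 y, A y & Heav (s j i * (y - T j i)) != 0 >].
have on_side_proj x : in_cube x ->
    on_side (proj j (iter n F @` cell n x)) = (switch n x j i != 0).
  move=> x_cube; apply/asboolP/idP => [[y /switch_on_proj <-]//|sw].
  by exists (iter n F x j) => //; exists (iter n F x) => //; exists x.
apply: (@card_le2_classifier _ _ on_side).
move=> _ _ [_ [/Qt_cell[x x_cube ->] xJ] <-] [_ [/Qt_cell[w w_cube ->] wJ] <-].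
rewrite !on_side_proj // => sw_eq.
by apply: proj_cell_eq => //; [rewrite xJ wJ | apply: Heav_eq].
Qed.

End TwoLoop.

End RegulatoryNetwork.

Theorem mainTheorem10 (R : realType) (d : nat)
  (K s T : 'I_d -> 'I_d -> R) (a : R) (i j : 'I_d) :
  regnet_params K s T a ->
  coord_injective K a ->
  non_degenerated K ->
  two_loop_isolated_end K i j ->
  drives K s T a i j.
Proof.
move=> params inj nondeg loop.
have [<-|i_neq_j] := eqVneq i j; first exact: drives_self.
exact: two_loop_drives.
Qed.
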